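(* Let $k\ge 2$ be an integer and let $d_1\ge d_2\ge\cdots\ge d_k\ge 2$ be integers. If $r\le d_1+k-2$, then for all sufficiently large $n$, $$ex\Big(n,K_r,\bigcup_{i=1}^k S_{d_i}\Big)\le \max\left\{\max_{1\le i\le k}\left\{\Big(\binom{d_i+i-1}{r}-\binom{i-1}{r}\Big)\Big\lceil\frac{n-i+1}{d_i}\Big\rceil+\binom{i-1}{r},\ \frac{d_i-1}{r-i+1}(n-i+1)\right\},\ \max_{1\le c<k-1}\left\{\frac{\max\big\{\binom{d_c+c}{r-1},\,d_c+c\big\}}{r-c}(n-c)\right\}\right\}.$$
   Context: $S_\ell$ denotes the star $K_{1,\ell}$ with $\ell$ edges, and $\bigcup_{i=1}^k S_{d_i}$ denotes the star forest that is the vertex-disjoint union of $S_{d_1},\dots,S_{d_k}$. For graphs $H$ and $F$, the generalized Turán number $ex(n,H,F)$ is the maximum number of copies of $H$ in an $n$-vertex graph containing no copy of $F$ as a subgraph; $K_r$ is the complete graph on $r$ vertices. Binomial coefficients $\binom{a}{b}$ with $a<b$ are $0$. *)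

From HB Require Import structures.
From mathcomp Require Import all_boot all_order all_algebra.
Set Implicit Arguments. Unset Strict Implicit. Unset Printing Implicit Defensive.
Import Order.TTheory GRing.Theory Num.Theory.

Definition simple_graph (n : nat) (g : {ffun 'I_n * 'I_n -> bool}) : bool :=
  [forall x, ~~ g (x, x)] && [forall x, forall y, g (x, y) == g (y, x)].

Definition contains_copy (n : nat) (g : {ffun 'I_n * 'I_n -> bool})
  (W : finType) (F : rel W) : bool :=
  [exists f : {ffun W -> 'I_n},
     injectiveb f && [forall x, forall y, F x y ==> g (f x, f y)]].

Definition num_Kr (n : nat) (g : {ffun 'I_n * 'I_n -> bool}) (r : nat) : nat :=
  #|[set S : {set 'I_n} | (#|S| == r) &&
       [forall x in S, forall y in S, (x != y) ==> g (x, y)]]|.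

Definition ex_Kr (n r : nat) (W : finType) (F : rel W) : nat :=
  \max_(g : {ffun 'I_n * 'I_n -> bool} | simple_graph g && ~~ contains_copy g F)
     num_Kr g r.

(* The star forest S_{d 1} u ... u S_{d k}: star number i (i : 'I_k stands
   for the star index i+1) has vertices 0 (the centre) and 1..d(i+1)
   (the leaves). *)
Definition sf_vertex (k : nat) (d : nat -> nat) : finType :=
  {i : 'I_k & 'I_(d i.+1).+1}.

Definition star_forest (k : nat) (d : nat -> nat) : rel (sf_vertex k d) :=
  fun u v => (tag u == tag v) &&
             ((val (tagged u) == 0%N) != (val (tagged v) == 0%N)).

From HB Require Import structures.
From mathcomp Require Import all_boot all_order all_algebra.
From mathcomp Require Import zify ring lra.
From Stdlib Require Import Classical.
Import Order.TTheory GRing.Theory Num.Theory.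
Set Implicit Arguments. Unset Strict Implicit. Unset Printing Implicit Defensive.

(* Call a vertex a hub if its degree is at least M = 2(d_1 + ... + d_k) + k.
   There are fewer than k hubs: k hubs as centres, with leaves chosen greedily,
   would already give the star forest.  With s hubs, greedily build disjoint
   stars S_{d_(s+1)}, ..., S_{d_(j-1)} away from the hubs for as long as
   possible, and let X be their (boundedly many) vertices and W the remaining
   non-hubs.  By maximality every vertex of W has fewer than d_j neighbours in
   W.  A K_r either lies among the hubs, or meets X (at most |X| C(M, r) such),
   or lies in hubs + W and meets W; double counting the last ones through
   their vertices in W gives at most (n - s)(C(d_j + s, r) - C(s, r)) / d_j of
   them.  If j > s + 1 the coefficient C(d_j + j - 1, r) - C(j - 1, r) of the
   claimed bound is strictly larger, which absorbs the constant terms for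
   large n; if C(d_j + s, r) = C(s, r) the count is constant, hence below
   n / r. *)

Lemma ex_last_true (P : nat -> Prop) a b : P a -> ~ P b -> a < b ->
  exists j, [/\ a <= j < b, P j & ~ P j.+1].
Proof.
move=> Pa; elim: b => // b IH nPb; rewrite ltnS leq_eqVlt => /orP [/eqP ab | ab].
  by subst b; exists a; split; rewrite ?leqnn ?ltnSn.
have [Pb | nPb'] := classic (P b); first by exists b; split; rewrite ?ltnSn ?(ltnW ab).
have [j [/andP [aj jb] Pj nPj]] := IH nPb' ab.
by exists j; split; rewrite ?aj ?(ltn_trans jb).
Qed.

Lemma bigcup_seqP (T : finType) (I : eqType) (r : seq I) (F : I -> {set T}) x :
  reflect (exists2 i, i \in r & x \in F i) (x \in \bigcup_(i <- r) F i).
Proof.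
elim: r => [|a r IH]; first by rewrite big_nil inE; right => -[].
rewrite big_cons inE; apply: (iffP orP) => [[xa | /IH [i ir xi]] | [i]].
- by exists a; rewrite ?mem_head.
- by exists i; rewrite // inE ir orbT.
by rewrite inE => /orP [/eqP <- | ir] xi; [left | right; apply/IH; exists i].
Qed.

Lemma leq_card_bigcup_seq (T : finType) (I : Type) (r : seq I) (P : pred I)
    (F : I -> {set T}) :
  #|\bigcup_(i <- r | P i) F i| <= \sum_(i <- r | P i) #|F i|.
Proof.
elim/big_ind2: _ => [|A1 m1 A2 m2 h1 h2|//]; first by rewrite cards0.
exact: leq_trans (leq_card_setU _ _).1 (leq_add h1 h2).
Qed.

Lemma leq_sum_subrange (F : nat -> nat) m n m' n' : m' <= m -> m <= n -> n <= n' ->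
  \sum_(m <= i < n) F i <= \sum_(m' <= i < n') F i.
Proof.
move=> le_m mn le_n; rewrite [leqRHS](@big_cat_nat _ _ _ m) ?(leq_trans mn) //=.
rewrite [\sum_(m <= i < n') _](@big_cat_nat _ _ _ n) //=.
exact: leq_trans (leq_addr _ _) (leq_addl _ _).
Qed.

Lemma exists_subset_card (T : finType) (A : {set T}) m :
  m <= #|A| -> exists2 B : {set T}, B \subset A & #|B| = m.
Proof.
move=> le_m_A; have : 0 < #|[set B : {set T} | B \subset A & #|B| == m]|.
  by rewrite cards_draws bin_gt0.
by case/card_gt0P => B; rewrite inE => /andP [sBA /eqP cB]; exists B.
Qed.

Lemma sum_nat_indicator (T : finType) (A : {set T}) (P : pred T) :
  \sum_(x in A) (P x : nat) = #|[set x in A | P x]|.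
Proof.
rewrite -sum1_card [RHS]big_mkcond [LHS]big_mkcond; apply: eq_bigr => x _.
by rewrite !inE; case: (x \in A); case: (P x).
Qed.

Lemma nonincreasing_ge_last (d : nat -> nat) k :
  (forall i, 1 <= i < k -> d i.+1 <= d i) -> forall t, 0 < t <= k -> d k <= d t.
Proof.
move=> d_dec t /andP [t0 tk].
pose D := [pred i | 0 < i <= k].
have convex : {in D &, forall i j l, i < l < j -> l \in D}.
  by move=> i j; rewrite !inE => /andP [i0 _] /andP [_ jk] l /andP [il lj]; apply/andP; lia.
have step : {in D, forall i, i.+1 \in D -> d i.+1 <= d i}.
  by move=> i; rewrite !inE => /andP [i0 _] /andP [_ ik]; apply: d_dec; rewrite i0.
apply: (homo_leq_in (r := fun x y => y <= x) leqnn _ convex step);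
  rewrite ?inE ?t0 ?tk ?(leq_trans t0 tk) ?leqnn //.
by move=> y x z xy yz; apply: leq_trans yz xy.
Qed.

Section StarForestCopy.
Variables (n : nat) (g : {ffun 'I_n * 'I_n -> bool}).
Hypothesis g_simple : simple_graph g.

Definition nbhd (v : 'I_n) : {set 'I_n} := [set u | g (v, u)].

Lemma adjC x y : g (x, y) = g (y, x).
Proof. by case/andP: g_simple => _ /forallP /(_ x) /forallP /(_ y) /eqP. Qed.

Lemma adj_irr x : g (x, x) = false.
Proof. by case/andP: g_simple => /forallP /(_ x) /negbTE. Qed.

Variables (k : nat) (d : nat -> nat).

Definition dsum := \sum_(1 <= t < k.+1) d t.

Lemma leq_d_dsum t : 0 < t <= k -> d t <= dsum.
Proof.
move=> tk; rewrite /dsum (bigD1_seq t) ?mem_index_iota ?ltnS ?iota_uniq //=.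
exact: leq_addr.
Qed.

Definition stars_from (m : nat) (cen : nat -> 'I_n) (lv : nat -> {set 'I_n}) :=
  [/\ {in [pred t | 0 < t <= k] &, injective cen},
      forall t t', 0 < t <= k -> m < t' <= k -> cen t \notin lv t',
      forall t, m < t <= k -> lv t \subset nbhd (cen t) /\ #|lv t| = d t &
      forall t t', m < t <= k -> m < t' <= k -> t != t' -> [disjoint lv t & lv t']].

Lemma stars_copy cen lv : stars_from 0 cen lv -> contains_copy g (@star_forest k d).
Proof.
rewrite /stars_from => -[cen_inj cen_lv lv_nbhd lv_disj].
have tagP (i : 'I_k) : 0 < i.+1 <= k by rewrite /= ltn_ord.
pose leaf t l := nth (cen t) (enum (lv t)) l.
have leaf_lv (i : 'I_k) l : l < d i.+1 -> leaf i.+1 l \in lv i.+1.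
  have [_ c_lv] := lv_nbhd _ (tagP i).
  by move=> ld; rewrite -mem_enum mem_nth // -cardE c_lv.
pose f (u : sf_vertex k d) := if val (tagged u) is l.+1 then leaf (tag u).+1 l
                              else cen (tag u).+1.
apply/existsP; exists [ffun u => f u]; apply/andP; split.
  apply/injectiveP => -[i [[|l] hl]] [i' [[|l'] hl']]; rewrite !ffunE /f /=.
  - move/cen_inj; rewrite !inE => /(_ (tagP i) (tagP i')) [/val_inj ii'].
    by subst i'; congr existT; apply: val_inj.
  - by move=> e; have := leaf_lv i' l' hl'; rewrite -e (negbTE (cen_lv _ _ _ _)).
  - by move=> e; have := leaf_lv i l hl; rewrite e (negbTE (cen_lv _ _ _ _)).
  case: (eqVneq i i') hl' => [<- | ii'] hl' e.
    congr existT; apply: val_inj => /=; congr _.+1; apply/eqP.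
    have [_ c_lv] := lv_nbhd _ (tagP i).
    by move: e => /eqP; rewrite nth_uniq ?enum_uniq // -cardE c_lv.
  have ne : i.+1 != i'.+1 by rewrite eqSS.
  by have := leaf_lv i l hl; rewrite e (disjointFl (lv_disj _ _ _ _ ne)) ?leaf_lv.
apply/forallP => -[i [l hl]]; apply/forallP => -[i' [l' hl']]; apply/implyP.
rewrite /star_forest !ffunE /f /= => /andP [/eqP ii']; subst i'.
have [sub _] := lv_nbhd _ (tagP i).
case: l hl => [|l] hl; case: l' hl' => [|l'] hl' //= _.
  by have := subsetP sub _ (leaf_lv i l' hl'); rewrite inE.
by have := subsetP sub _ (leaf_lv i l hl); rewrite inE adjC.
Qed.

Lemma fresh_leaves m cen lv : m < k -> stars_from m.+1 cen lv ->
    dsum + k + d m.+1 <= #|nbhd (cen m.+1)| ->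
  exists A : {set 'I_n}, [/\ A \subset nbhd (cen m.+1), #|A| = d m.+1,
    forall t, 0 < t <= k -> cen t \notin A &
    forall t, m.+1 < t <= k -> [disjoint A & lv t]].
Proof.
rewrite /stars_from => mk [_ _ lv_nbhd _] deg.
pose C := \bigcup_(t <- index_iota 1 k.+1) [set cen t].
pose U := \bigcup_(t <- index_iota m.+2 k.+1) lv t.
have cardC : #|C| <= k.
  apply: leq_trans (leq_card_bigcup_seq _ xpredT _) _.
  by under eq_bigr do rewrite cards1; rewrite sum1_size size_iota subn1.
have cardU : #|U| <= dsum.
  apply: (@leq_trans (\sum_(m.+2 <= t < k.+1) d t)).
    apply: leq_trans (leq_card_bigcup_seq _ xpredT _) _.
    rewrite big_seq [leqRHS]big_seq; apply: leq_sum => t.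
    by rewrite mem_index_iota ltnS => /lv_nbhd [_ ->].
  exact: leq_sum_subrange.
have room : d m.+1 <= #|nbhd (cen m.+1) :\: (C :|: U)|.
  have used : #|nbhd (cen m.+1) :&: (C :|: U)| <= dsum + k.
    rewrite addnC; apply: leq_trans (subset_leq_card (subsetIr _ _)) _.
    exact: leq_trans (leq_card_setU C U).1 (leq_add cardC cardU).
  rewrite cardsD; apply: leq_trans (leq_sub2l _ used); move: deg; lia.
have [A sA cA] := exists_subset_card room.
exists A; split => [||t tk|t tk].
- exact: subset_trans sA (subsetDl _ _).
- exact: cA.
- apply/negP => /(subsetP sA); rewrite !inE => /andP [/norP [/negP + _] _].
  by apply; apply/bigcup_seqP; exists t; rewrite ?set11 ?mem_index_iota.
rewrite disjoint_subset; apply/subsetP => x /(subsetP sA).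
rewrite !inE negb_or => /andP [/andP [_ xU] _]; apply: contra xU => xl.
by apply/bigcup_seqP; exists t; rewrite ?mem_index_iota.
Qed.

Lemma stars_from_fill m cen lv : m < k -> stars_from m.+1 cen lv ->
  dsum + k + d m.+1 <= #|nbhd (cen m.+1)| -> exists lv', stars_from m cen lv'.
Proof.
move=> mk sf deg; have [A [A_nbhd cA cen_A A_lv]] := fresh_leaves mk sf deg.
case: sf => cen_inj cen_lv lv_nbhd lv_disj.
have above t : m < t <= k -> t != m.+1 -> m.+1 < t <= k.
  by case/andP=> mt ->; rewrite ltn_neqAle mt eq_sym => ->.
exists (fun t => if t == m.+1 then A else lv t); split => //.
- move=> t t' tk t'k; case: eqVneq => [_ | /(above _ t'k)]; first exact: cen_A.
  exact: cen_lv.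
- move=> t tk; case: eqVneq => [-> | /(above _ tk)]; first by rewrite cA.
  exact: lv_nbhd.
move=> t t' tk t'k tt'.
have [te | /(above _ tk) tk'] := eqVneq t m.+1.
  have [t'e | /(above _ t'k) t'k'] := eqVneq t' m.+1; first by rewrite te t'e eqxx in tt'.
  exact: A_lv.
have [_ | /(above _ t'k) t'k'] := eqVneq t' m.+1.
  by rewrite disjoint_sym; exact: A_lv.
exact: lv_disj.
Qed.

Lemma stars_from_copy m cen lv : m <= k -> stars_from m cen lv ->
    (forall t, 0 < t <= m -> dsum + k + d t <= #|nbhd (cen t)|) ->
  contains_copy g (@star_forest k d).
Proof.
elim: m lv => [|m IH] lv mk sf deg; first exact: stars_copy sf.
have [lv' sf'] := stars_from_fill mk sf (deg m.+1 (leqnn _)).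
apply: IH sf' _ => [|t /andP [t0 tm]]; first exact: ltnW.
by apply: deg; rewrite t0 ltnW.
Qed.

End StarForestCopy.

Section CliqueCount.
Variables (n : nat) (g : {ffun 'I_n * 'I_n -> bool}).

Definition clique (S : {set 'I_n}) := [forall x in S, forall y in S, (x != y) ==> g (x, y)].

Lemma cliqueP S x y : clique S -> x \in S -> y \in S -> x != y -> g (x, y).
Proof. by move=> /forall_inP /(_ x) cS xS /(forall_inP (cS xS)) /implyP. Qed.

Lemma num_Kr_le_bin r : num_Kr g r <= 'C(n, r).
Proof.
rewrite /num_Kr -[n in 'C(n, _)]card_ord -card_draws; apply: subset_leq_card.
by apply/subsetP => S; rewrite !inE => /andP [-> _].
Qed.

Variables (L X : {set 'I_n}) (D M r : nat).
Let W := ~: (L :|: X).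
Hypothesis small_X : forall x, x \in X -> #|nbhd g x| < M.
Hypothesis sparse_W : forall w, w \in W -> #|nbhd g w :&: W| < D.

Let Kr := [set S : {set 'I_n} | (#|S| == r) && clique S].
(* These cliques lie in [L :|: W] and meet [W]. *)
Let mixed := [set S in Kr | [disjoint S & X] && ~~ (S \subset L)].
Let mixed_with q := [set S in mixed | #|S :&: W| == q].

Lemma mixed_setD S : S \in mixed -> S :\: L = S :&: W.
Proof.
rewrite !inE => /andP [_ /andP [dX _]]; apply/setP => x; rewrite !inE negb_or.
by case: (boolP (x \in S)) => xS; rewrite ?andbF // (disjointFr dX xS) !andbT.
Qed.

Lemma mixed_card S : S \in mixed -> #|S :&: L| + #|S :&: W| = r.
Proof.
move=> mS; rewrite -(mixed_setD mS) cardsID.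
by move: mS; rewrite !inE => /andP [/andP [/eqP -> _] _].
Qed.

(* A clique of [mixed_with q] through [w] is determined by its part in [L]
   and by its other [q - 1] vertices, all neighbours of [w] in [W]. *)
Lemma card_mixed_through q w : w \in W -> 0 < q ->
  #|[set S in mixed_with q | w \in S]| <= 'C(#|L|, r - q) * 'C(D.-1, q.-1).
Proof.
move=> wW q0.
pose split_at_w (S : {set 'I_n}) := (S :&: L, (S :&: W) :\ w).
pose parts_L := [set A : {set 'I_n} | A \subset L & #|A| == r - q].
pose parts_W := [set B : {set 'I_n} | B \subset nbhd g w :&: W & #|B| == q.-1].
have memS S : (S \in [set S in mixed_with q | w \in S]) =
              [&& S \in mixed, #|S :&: W| == q & w \in S].
  by rewrite !inE -andbA.
have inj : {in [set S in mixed_with q | w \in S] &, injective split_at_w}.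
  move=> S1 S2; rewrite !memS => /and3P [m1 _ w1] /and3P [m2 _ w2] [e1 e2].
  have rebuild S : S \in mixed -> w \in S -> S = (S :&: L) :|: (w |: ((S :&: W) :\ w)).
    move=> mS wS; rewrite setD1K; last by rewrite inE wS wW.
    by rewrite -(mixed_setD mS) setID.
  by rewrite (rebuild _ m1 w1) (rebuild _ m2 w2) e1 e2.
rewrite -(card_in_imset inj).
apply: leq_trans (subset_leq_card (_ : _ \subset setX parts_L parts_W)) _.
  apply/subsetP => p /imsetP [S]; rewrite memS => /and3P [mS /eqP qS wS] ->.
  have cS : clique S by move: mS; rewrite !inE => /andP [/andP [_ ->]].
  have eL : #|S :&: L| = r - q by rewrite -(mixed_card mS) qS addnK.
  rewrite !inE subsetIr eL eqxx /=; apply/andP; split.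
    apply/subsetP => y; rewrite !inE => /andP [ne /andP [yS yW]]; rewrite yW andbT.
    by apply: (cliqueP cS wS yS); rewrite eq_sym.
  by move: qS; rewrite (cardsD1 w (S :&: W)) in_setI wS wW => <-.
rewrite cardsX !cards_draws leq_mul2l; apply/orP; right.
by apply: leq_bin2l; have := sparse_W wW; case: D.
Qed.

Lemma card_mixed_with q : 0 < q ->
  D * #|mixed_with q| <= #|W| * ('C(#|L|, r - q) * 'C(D, q)).
Proof.
move=> q0.
have double_count : q * #|mixed_with q| = \sum_(w in W) #|[set S in mixed_with q | w \in S]|.
  transitivity (\sum_(S in mixed_with q) \sum_(w in W) (w \in S : nat)).
    rewrite mulnC -sum_nat_const; apply: eq_bigr => S; rewrite inE => /andP [_ /eqP <-].
    by rewrite sum_nat_indicator; apply: eq_card => x; rewrite !inE andbC.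
  by rewrite exchange_big; apply: eq_bigr => w _; rewrite sum_nat_indicator.
rewrite -(leq_pmul2l q0) mulnCA double_count big_distrr /=.
apply: (@leq_trans (\sum_(w in W) D * ('C(#|L|, r - q) * 'C(D.-1, q.-1)))).
  by apply: leq_sum => w wW; rewrite leq_mul2l card_mixed_through ?orbT.
rewrite sum_nat_const; apply: eq_leq.
have := mul_bin_diag D q.-1; rewrite prednK // => bin_diag.
by rewrite [D * (_ * _)]mulnCA bin_diag; ring.
Qed.

Lemma card_mixed : D * #|mixed| <= #|W| * ('C(D + #|L|, r) - 'C(#|L|, r)).
Proof.
have cover : mixed \subset \bigcup_(q < r.+1) mixed_with q.
  apply/subsetP => S mS; apply/bigcupP.
  have le : #|S :&: W| < r.+1 by rewrite ltnS -(mixed_card mS) leq_addl.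
  by exists (Ordinal le); rewrite // inE mS /=.
have none0 : mixed_with 0 = set0.
  apply/setP => S; rewrite in_set in_set0; apply/negP => /andP [mS /eqP /cards0_eq e].
  move: (mixed_setD mS) (mS); rewrite e => /eqP; rewrite setD_eq0 => sL.
  by rewrite !inE sL !andbF.
have := leq_trans (subset_leq_card cover) (leq_card_bigcup_seq _ xpredT _).
move/(leq_mul (leqnn D)) /leq_trans; apply.
rewrite big_ord_recl /= none0 cards0 add0n big_distrr /=.
apply: (@leq_trans (\sum_(q < r) #|W| * ('C(#|L|, r - q.+1) * 'C(D, q.+1)))).
  by apply: leq_sum => q _; apply: card_mixed_with.
rewrite -big_distrr /= leq_mul2l; apply/orP; right.
have := binomial.Vandermonde D #|L| r; rewrite big_ord_recl bin0 mul1n subn0 => <-.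
by rewrite addKn; apply: eq_leq; apply: eq_bigr => q _; rewrite mulnC.
Qed.

(* A clique meeting [X] lies in the closed neighbourhood of any of its
   vertices in [X]. *)
Lemma num_Kr_split : num_Kr g r <= 'C(#|L|, r) + #|X| * 'C(M, r) + #|mixed|.
Proof.
pose in_L := [set S : {set 'I_n} | S \subset L & #|S| == r].
pose at_X := \bigcup_(x in X) [set S : {set 'I_n} | S \subset x |: nbhd g x & #|S| == r].
have cover : Kr \subset in_L :|: at_X :|: mixed.
  apply/subsetP => S KS; have := KS; rewrite inE => /andP [/eqP cS cqS].
  case: (boolP [disjoint S & X]) => dX.
    case: (boolP (S \subset L)) => sL; first by rewrite !inE sL cS eqxx.
    by rewrite [S \in _ :|: mixed]inE [S \in mixed]inE KS dX sL orbT.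
  rewrite -setI_eq0 in dX; case/set0Pn: dX => x; rewrite inE => /andP [xS xX].
  rewrite [S \in _ :|: mixed]inE [S \in _ :|: at_X]inE; apply/orP; left; apply/orP; right.
  apply/bigcupP; exists x => //; rewrite inE cS eqxx andbT; apply/subsetP => y yS.
  rewrite !inE; case: (eqVneq y x) => //= ne; apply: (cliqueP cqS xS yS); by rewrite eq_sym.
apply: leq_trans (subset_leq_card cover) _.
apply: leq_trans (leq_card_setU _ _).1 _; rewrite leq_add2r.
apply: leq_trans (leq_card_setU _ _).1 _; apply: leq_add; first by rewrite cards_draws.
apply: leq_trans (leq_card_bigcup_seq _ (fun x => x \in X) _) _.
rewrite -sum_nat_const; apply: leq_sum => x xX; rewrite cards_draws; apply: leq_bin2l.
rewrite cardsU1; have := small_X xX.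
by case: (x \in nbhd g x) => /= lt; [rewrite add0n ltnW | rewrite add1n].
Qed.

Lemma num_Kr_decomposition : exists c, num_Kr g r <= 'C(#|L|, r) + #|X| * 'C(M, r) + c /\
  D * c <= #|W| * ('C(D + #|L|, r) - 'C(#|L|, r)).
Proof. by exists #|mixed|; split; [exact: num_Kr_split | exact: card_mixed]. Qed.

End CliqueCount.

Definition hub_deg (k : nat) (d : nat -> nat) := dsum k d + k + dsum k d.

Section GreedyStars.
Variables (n : nat) (g : {ffun 'I_n * 'I_n -> bool}) (k : nat) (d : nat -> nat).
Hypothesis g_simple : simple_graph g.
Hypothesis F_free : ~~ contains_copy g (@star_forest k d).

Definition hubs := [set v | hub_deg k d <= #|nbhd g v|].

(* The hubs are reserved as the centres of the first [#|hubs|] stars; the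
   stars [#|hubs| + 1 .. j - 1] are built away from them. *)
Definition family (j : nat) (c : nat -> 'I_n) (lv : nat -> {set 'I_n}) :=
  [/\ forall t, #|hubs| < t < j -> c t \notin hubs /\
                   lv t \subset nbhd g (c t) :\: hubs /\ #|lv t| = d t,
      {in [pred t | #|hubs| < t < j] &, injective c},
      forall t t', #|hubs| < t < j -> #|hubs| < t' < j -> c t \notin lv t' &
      forall t t', #|hubs| < t < j -> #|hubs| < t' < j -> t != t' ->
        [disjoint lv t & lv t']].

Lemma family_trivial j c lv : j <= #|hubs|.+1 -> family j c lv.
Proof.
move=> js; have none t : #|hubs| < t < j -> False.
  by case/andP=> st /leq_trans /(_ js); rewrite ltnS leqNgt st.
by split=> [t /none | t t' | t t' /none | t t' /none] //; rewrite inE => /none.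
Qed.

Lemma no_full_family c lv : ~ family k.+1 c lv.
Proof.
rewrite /family => -[c_out c_inj c_lv lv_disj].
set s := #|hubs|.
pose cen t := if t <= s then nth (c 0) (enum hubs) t.-1 else c t.
have cen_hub t : 0 < t <= s -> cen t \in hubs.
  by case/andP=> t0 ts; rewrite /cen ts -mem_enum mem_nth // -cardE; case: t t0 ts.
have cen_c t : s < t -> cen t = c t by rewrite /cen ltnNge => /negbTE ->.
have above t : minn s k < t <= k -> s < t < k.+1 by rewrite ltnS; lia.
apply: (negP F_free); apply: (@stars_from_copy _ g g_simple k d (minn s k) cen lv).
- exact: geq_minr.
- split.
  + move=> t t'; rewrite !inE => /andP [t0 tk] /andP [t0' tk'].
    case: (leqP t s) => ts; case: (leqP t' s) => t's.
    * rewrite /cen ts t's => /eqP; rewrite nth_uniq ?enum_uniq -?cardE ?prednK // => /eqP e.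
      by rewrite -(prednK t0) -(prednK t0') e.
    * move=> e; have := cen_hub t; rewrite t0 ts e cen_c // => /(_ isT) hub.
      have /c_out [nhub _] : s < t' < k.+1 by rewrite t's.
      by rewrite hub in nhub.
    * move=> e; have := cen_hub t'; rewrite t0' t's -e cen_c // => /(_ isT) hub.
      have /c_out [nhub _] : s < t < k.+1 by rewrite ts.
      by rewrite hub in nhub.
    * by rewrite !cen_c //; apply: c_inj; rewrite inE ?ts ?t's ltnS.
  + move=> t t' /andP [t0 tk] /above t'_fam.
    have [_ [sub _]] := c_out t' t'_fam.
    case: (leqP t s) => ts.
      apply/negP => /(subsetP sub); rewrite inE => /andP [].
      by rewrite cen_hub ?t0.
    by rewrite cen_c //; apply: c_lv; rewrite ?ts ltnS.
  + move=> t /above t_fam; have [_ [sub ->]] := c_out t t_fam.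
    by rewrite cen_c; [split=> //; exact: subset_trans sub (subsetDl _ _) | case/andP: t_fam].
  + by move=> t t' /above t_fam /above t'_fam; apply: lv_disj.
move=> t /andP [t0 tm]; have /cen_hub : 0 < t <= s by rewrite t0 (leq_trans tm) ?geq_minl.
rewrite inE; apply: leq_trans; rewrite leq_add2l leq_d_dsum // t0.
exact: leq_trans tm (geq_minr _ _).
Qed.

Definition family_vertices j (c : nat -> 'I_n) (lv : nat -> {set 'I_n}) :=
  \bigcup_(t <- index_iota #|hubs|.+1 j) (c t |: lv t).

Lemma family_verticesP j c lv x : reflect (exists2 t, #|hubs| < t < j & x \in c t |: lv t)
  (x \in family_vertices j c lv).
Proof.
apply: (iffP (bigcup_seqP _ _ _)) => -[t tj xt]; exists t => //;
  by rewrite mem_index_iota in tj *.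
Qed.

Lemma family_ext j c lv w (A : {set 'I_n}) : family j c lv ->
    w \notin hubs -> w \notin family_vertices j c lv ->
    A \subset nbhd g w :\: (hubs :|: family_vertices j c lv) -> #|A| = d j ->
  family j.+1 (fun t => if t == j then w else c t) (fun t => if t == j then A else lv t).
Proof.
rewrite /family => -[c_out c_inj c_lv lv_disj] w_hub w_fam sA cA.
have old t : #|hubs| < t < j.+1 -> t != j -> #|hubs| < t < j.
  by case/andP=> -> /=; rewrite ltnS ltn_neqAle => -> ->.
have c_fam t : #|hubs| < t < j -> c t \in family_vertices j c lv.
  by move=> tj; apply/family_verticesP; exists t; rewrite ?setU11.
have lv_fam t : #|hubs| < t < j -> lv t \subset family_vertices j c lv.
  by move=> tj; apply/subsetP => x xl; apply/family_verticesP; exists t; rewrite // setU1r.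
have A_new x : x \in A -> [/\ x \notin family_vertices j c lv, x \notin hubs & x \in nbhd g w].
  by move/(subsetP sA); rewrite !inE negb_or => /andP [/andP [-> ->] ->].
have wA : w \notin A by apply/negP => /A_new [_ _]; rewrite inE adj_irr.
split.
- move=> t tj; case: eqVneq => [-> | /(old _ tj) /c_out //].
  split=> //; split=> //; apply/subsetP => x /A_new [_ xh xw].
  by rewrite inE xh.
- move=> t t'; rewrite !inE /= => tj t'j.
  have [tj0 | /(old _ tj) tj'] := eqVneq t j;
    have [t'j0 | /(old _ t'j) t'j'] := eqVneq t' j.
  + by rewrite tj0 t'j0.
  + by move=> e; move: w_fam; rewrite e c_fam.
  + by move=> e; move: w_fam; rewrite -e c_fam.
  + by apply: c_inj; rewrite inE.
- move=> t t' tj t'j.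
  have [_ | /(old _ tj) tj'] := eqVneq t j;
    have [_ // | /(old _ t'j) t'j'] := eqVneq t' j.
  + by apply: contra w_fam => /(subsetP (lv_fam _ t'j')).
  + by apply/negP => /A_new [] /negP; rewrite c_fam.
  + exact: c_lv.
move=> t t' tj t'j tt'.
have [tj0 | /(old _ tj) tj'] := eqVneq t j.
  have [t'j0 | /(old _ t'j) t'j'] := eqVneq t' j; first by rewrite tj0 t'j0 eqxx in tt'.
  rewrite disjoint_subset; apply/subsetP => x /A_new [+ _ _]; rewrite inE.
  by apply: contra => /(subsetP (lv_fam _ t'j')).
have [_ | /(old _ t'j) t'j'] := eqVneq t' j; last exact: lv_disj.
rewrite disjoint_sym disjoint_subset; apply/subsetP => x /A_new [+ _ _]; rewrite inE.
by apply: contra => /(subsetP (lv_fam _ tj')).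
Qed.

Lemma card_family_vertices j c lv : family j c lv -> j <= k.+1 ->
  #|family_vertices j c lv| <= dsum k d + k.
Proof.
case=> c_out _ _ _ jk; apply: leq_trans (leq_card_bigcup_seq _ xpredT _) _.
apply: (@leq_trans (\sum_(#|hubs|.+1 <= t < j) (d t + 1))).
  rewrite big_seq [leqRHS]big_seq; apply: leq_sum => t; rewrite mem_index_iota => tj.
  have [_ [_ <-]] := c_out t tj.
  by rewrite cardsU1 addnC leq_add2l leq_b1.
apply: (@leq_trans (\sum_(1 <= t < k.+1) (d t + 1))).
  case: (leqP j #|hubs|.+1) => js; first by rewrite big_geq.
  exact: leq_sum_subrange (ltnW js) jk.
by rewrite big_split /= sum_nat_const_nat subn1 muln1.
Qed.

(* [s] is the number of hubs, [j] the first star that cannot be added to a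
   family and [x] the number of vertices of that family. *)
Lemma num_Kr_structure r : 0 < n -> exists s j x c,
  [/\ s < j <= k, x <= dsum k d + k, (j = s.+1 -> x = 0),
      num_Kr g r <= 'C(s, r) + x * 'C(hub_deg k d, r) + c &
      d j * c <= (n - s) * ('C(d j + s, r) - 'C(s, r))].
Proof.
move=> n0; set s := #|hubs|.
pose P j := exists c lv, family j c lv.
have P_small j : j <= s.+1 -> P j.
  by move=> js; exists (fun=> Ordinal n0), (fun=> set0); exact: family_trivial.
have notPk : ~ P k.+1 by case=> c [lv]; exact: no_full_family.
have sk : s < k by rewrite ltnNge; apply/negP => ks; apply: notPk; apply: P_small; rewrite ltnS.
have [j [/andP [sj jk] [c [lv fam]] notPj]] :=
  ex_last_true (P_small _ (leqnn _)) notPk (sk : s.+1 < k.+1).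
pose X := family_vertices j c lv.
pose W := ~: (hubs :|: X).
have small_X x : x \in X -> #|nbhd g x| < hub_deg k d.
  case/family_verticesP => t tj xt; have [c_out _ _ _] := fam.
  have [c_hub [sub _]] := c_out t tj.
  suff : x \notin hubs by rewrite inE -ltnNge.
  move: xt; rewrite in_setU1 => /orP [/eqP -> // | /(subsetP sub)].
  by rewrite inE => /andP [].
have sparse_W w : w \in W -> #|nbhd g w :&: W| < d j.
  move=> wW; rewrite ltnNge; apply/negP => big.
  have [A sA cA] := exists_subset_card big.
  move: wW; rewrite in_setC in_setU negb_or => /andP [w_hub w_X].
  apply: notPj; exists (fun t => if t == j then w else c t), (fun t => if t == j then A else lv t).
  apply: family_ext => //; apply: subset_trans sA _; apply/subsetP => y.
  by rewrite !inE negb_or andbC.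
have [c3 [count_Kr count_mixed]] := num_Kr_decomposition r small_X sparse_W.
exists s, j, #|X|, c3; split => //.
- by rewrite sj.
- exact: card_family_vertices fam (ltnW jk).
- by move=> ej; apply/eqP; rewrite cards_eq0 /X /family_vertices ej /index_iota subnn big_nil.
apply: leq_trans count_mixed _; rewrite leq_mul2r; apply/orP; right.
rewrite -[n in n - _]card_ord -(cardsC hubs) addKn; apply: subset_leq_card.
by rewrite setCU subsetIl.
Qed.

End GreedyStars.

Definition bin_gap D y r := 'C(D + y, r) - 'C(y, r).

Lemma bin_gapS D y r :
  bin_gap D y.+1 r = bin_gap D y r + bin_gap D y r.-1 * (0 < r).
Proof.
rewrite /bin_gap; case: r => [|r]; first by rewrite !bin0.
rewrite addnS !binS /= muln1.
have := leq_bin2l r.+1 (leq_addl D y); have := leq_bin2l r (leq_addl D y); lia.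
Qed.

Lemma bin_gap_homo D r : {homo bin_gap D ^~ r : x y / x <= y}.
Proof. by apply: homo_leq => [//|y x z|y]; [exact: leq_trans | rewrite bin_gapS leq_addr]. Qed.

Lemma bin_gap_ltS D y r : 1 < r -> 0 < bin_gap D y r -> bin_gap D y r < bin_gap D y.+1 r.
Proof.
case: r => [|[|r]] // _ gap0; rewrite bin_gapS /= muln1 -[ltnLHS]addn0 ltn_add2l.
have D0 : 0 < D by case: D gap0 => //; rewrite /bin_gap subnn.
have Dy : r.+2 <= D + y.
  by move: gap0; rewrite subn_gt0 => /(leq_ltn_trans (leq0n _)); rewrite bin_gt0.
rewrite subn_gt0; case: (ltnP y r.+1) => yr; first by rewrite bin_small // bin_gt0 ltnW.
apply: leq_trans (_ : 'C(y.+1, r.+1) <= _); first by rewrite binS -addn1 leq_add2l bin_gt0 ltnW.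
by apply: leq_bin2l; lia.
Qed.

Lemma absorb_constant D K s i n a a' c : s <= i -> a < a' ->
    D * K + i * a + i <= n -> D * c <= (n - s) * a ->
  D * (K + c) <= (n - i) * a'.
Proof. nia. Qed.

(* The left case yields the star term of index [i] of the bound, the right
   case its linear term of index 1. *)
Definition star_or_linear_bound k (d : nat -> nat) r n (g : {ffun 'I_n * 'I_n -> bool}) :=
  (exists2 i, 0 < i <= k & exists2 c, num_Kr g r <= 'C(i.-1, r) + c &
                                d i * c <= (n - i.-1) * bin_gap (d i) i.-1 r)
  \/ (0 < r /\ r * num_Kr g r <= n).

Lemma star_or_linear_bound_small_r k d r n (g : {ffun 'I_n * 'I_n -> bool}) :
  0 < k -> r <= 1 -> star_or_linear_bound k d r g.
Proof.
move=> k0 r1; left; exists 1; first by rewrite k0.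
exists ('C(n, r) - 'C(0, r)); first by rewrite subnKC ?num_Kr_le_bin // leq_bin2l.
case: r r1 => [|[|//]] _ /=; first by rewrite !bin0 subnn muln0.
by rewrite /bin_gap !bin1 addn0 !subn0 mulnC.
Qed.

Lemma num_Kr_dichotomy (k : nat) (d : nat -> nat) (r : nat) :
    (forall t, 0 < t <= k -> 0 < d t) -> 0 < k ->
  exists N, forall n (g : {ffun 'I_n * 'I_n -> bool}), N <= n -> simple_graph g ->
    ~~ contains_copy g (@star_forest k d) -> star_or_linear_bound k d r g.
Proof.
move=> d_pos k0; have [r1 | r2] := leqP r 1.
  by exists 0 => n g _ _ _; apply: star_or_linear_bound_small_r.
pose K := 'C(k, r) + (dsum k d + k) * 'C(hub_deg k d, r).
exists (dsum k d * K + k * 'C(dsum k d + k, r) + k + r * K) => n g nN g_simple F_free.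
have n0 : 0 < n by apply: leq_trans nN; move: k0; lia.
have [s [j [x [c [/andP [sj jk] x_le x0 count_Kr count_c]]]]] :=
  num_Kr_structure g_simple F_free r n0.
case: j sj jk x0 count_c => [//|i]; rewrite ltnS -/(bin_gap _ s r) => si ik x0 count_c.
have i_pos : 0 < i.+1 <= k by [].
have K_le : 'C(s, r) + x * 'C(hub_deg k d, r) <= K.
  by rewrite leq_add ?leq_mul ?leq_bin2l // (leq_trans si (ltnW ik)).
have [i_s | ne_is] := eqVneq i s.
  subst s; left; exists i.+1 => //; exists c => //.
  by move: count_Kr; rewrite (x0 erefl) mul0n addn0.
have [gap0 | gap_pos] := posnP (bin_gap (d i.+1) s r).
  have c0 : c = 0.
    move: count_c; rewrite gap0 muln0 leqn0 muln_eq0 => /orP [|/eqP //].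
    by move/eqP => d0; move: (d_pos _ i_pos); rewrite d0.
  right; split; first exact: ltnW r2.
  apply: leq_trans (leq_trans _ (leq_addl _ _)) nN.
  rewrite leq_mul2l; apply/orP; right.
  by move: count_Kr K_le; rewrite c0 addn0; exact: leq_trans.
left; exists i.+1 => //; exists (K + c); first by move: count_Kr K_le; lia.
apply: absorb_constant count_c => //.
  have si' : s < i by rewrite ltn_neqAle eq_sym ne_is si.
  exact: leq_trans (bin_gap_ltS r2 gap_pos) (bin_gap_homo _ _ si').
have D_le : d i.+1 <= dsum k d := leq_d_dsum d i_pos.
have gap_le : bin_gap (d i.+1) s r <= 'C(dsum k d + k, r).
  by apply: leq_trans (leq_subr _ _) (leq_bin2l _ _); rewrite leq_add // (leq_trans si (ltnW ik)).
apply: leq_trans (leq_trans _ (leq_addr (r * K) _)) nN.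
by rewrite !leq_add ?leq_mul // ltnW.
Qed.

Local Open Scope ring_scope.

Lemma ler_nat_mul_ceil (R : archiRealFieldType) (x D a c : nat) : (0 < D)%N ->
  (D * c <= x * a)%N -> (c%:R : R) <= a%:R * (Num.ceil (x%:R / D%:R : R))%:~R.
Proof.
move=> D0 le_Dc; have D0' : (0 : R) < D%:R by rewrite ltr0n.
apply: (@le_trans _ _ (a%:R * (x%:R / D%:R))).
  by rewrite mulrA ler_pdivlMr // -!natrM ler_nat mulnC (mulnC a).
by apply: ler_wpM2l; [rewrite ler0n | exact: Num.Theory.ceil_ge].
Qed.

Lemma star_term_ge (R : archiRealFieldType) (D i n r m c : nat) :
    (0 < i)%N -> (i.-1 <= n)%N -> (0 < D)%N ->
    (m <= 'C(i.-1, r) + c)%N -> (D * c <= (n - i.-1) * bin_gap D i.-1 r)%N ->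
  (m%:R : R) <= ('C(D + i - 1, r)%:R - 'C(i - 1, r)%:R)
                  * (Num.ceil ((n%:R - i%:R + 1) / D%:R : R))%:~R + 'C(i - 1, r)%:R.
Proof.
case: i => [//|i] _ /= i_n D0 m_le c_le.
rewrite addnS !subn1 /= -natrB ?leq_bin2l ?leq_addl // -/(bin_gap D i r).
have -> : (n%:R - i.+1%:R + 1 : R) = (n - i)%N%:R by rewrite natrB // -addn1 natrD; ring.
apply: le_trans (_ : ('C(i, r) + c)%N%:R <= _); first by rewrite ler_nat.
by rewrite natrD addrC lerD2r ler_nat_mul_ceil.
Qed.

Lemma linear_term_ge (R : realFieldType) (D r n m : nat) :
    (2 <= D)%N -> (0 < r)%N -> (r * m <= n)%N ->
  (m%:R : R) <= (D%:R - 1) / (r%:R - 1%:R + 1) * (n%:R - 1%:R + 1).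
Proof.
move=> D2 r0 rm; rewrite !subrK mulrAC ler_pdivlMr ?ltr0n //.
apply: (@le_trans _ _ (n%:R * 1)); first by rewrite mulr1 mulrC -natrM ler_nat.
rewrite [leRHS]mulrC ler_wpM2l ?ler0n //.
have : (2 : R) <= D%:R by rewrite ler_nat.
lra.
Qed.

Lemma ex_Kr_le (R : numDomainType) n r (W : finType) (F : rel W) (bound : R) :
    0 <= bound ->
    (forall g : {ffun 'I_n * 'I_n -> bool}, simple_graph g -> ~~ contains_copy g F ->
      (num_Kr g r)%:R <= bound) ->
  (ex_Kr n r F)%:R <= bound.
Proof.
move=> bound0 le_bound; rewrite /ex_Kr.
elim/big_ind: _ => // [a b ha hb | g /andP []]; last exact: le_bound.
by rewrite /maxn; case: ifP.
Qed.

Unset Implicit Arguments.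

Theorem corollary6p2 (k : nat) (d : nat -> nat) (r : nat) :
  (2 <= k)%N ->
  (forall i, (1 <= i < k)%N -> (d i.+1 <= d i)%N) ->
  (2 <= d k)%N ->
  (r <= d 1%N + k - 2)%N ->
  exists N : nat, forall n : nat, (N <= n)%N ->
    ((ex_Kr n r (@star_forest k d))%:R : rat) <=
    Num.max
      (\big[Num.max/0]_(1 <= i < k.+1)
         Num.max
           ((('C(d i + i - 1, r))%:R - ('C(i - 1, r))%:R)
              * (Num.ceil ((n%:R - i%:R + 1) / (d i)%:R : rat))%:~R
            + ('C(i - 1, r))%:R)
           (((d i)%:R - 1) / (r%:R - i%:R + 1) * (n%:R - i%:R + 1)))
      (\big[Num.max/0]_(1 <= c < k.-1)
         ((maxn 'C(d c + c, r.-1) (d c + c))%:R / (r%:R - c%:R)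
            * (n%:R - c%:R))).
Proof.
move=> k2 d_dec dk2 _.
have d_ge2 t : (0 < t <= k)%N -> (2 <= d t)%N.
  by move=> tk; apply: leq_trans dk2 (nonincreasing_ge_last d_dec tk).
have [N HN] := num_Kr_dichotomy r (fun t tk => ltnW (d_ge2 t tk)) (ltnW k2).
exists (maxn N k) => n; rewrite geq_max => /andP [Nn kn].
apply: ex_Kr_le; first by rewrite le_max bigmax_ge_id.
move=> g g_simple F_free; rewrite le_max; apply/orP; left.
case: (HN n g Nn g_simple F_free) => [[i i_k [c count_c gap_c]] | [r0 rm]].
  apply: (bigmax_sup_seq _ i); rewrite ?mem_index_iota //.
  have [i0 ik] := andP i_k.
  rewrite le_max (star_term_ge _ i0 _ _ count_c gap_c) ?(ltnW (d_ge2 _ i_k)) //.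
  exact: leq_trans (leq_pred _) (leq_trans ik kn).
apply: (bigmax_sup_seq _ 1%N) => //; first by rewrite mem_index_iota; lia.
rewrite le_max linear_term_ge ?orbT //; apply: d_ge2; by rewrite (ltnW k2).
Qed.
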